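(* Let $A\in\mathbb{R}^{n\times n}$ and $B\in\mathbb{R}^{n\times m}$ be (unknown) matrices defining the discrete-time system $x^+=Ax+Bu$. Let $\mathrm{S}\in\mathbb{R}^{n_s\times n}$ be such that $\mathcal{S}:=\{x\in\mathbb{R}^n:\mathrm{S}x\le \mathbf{1}\}$ is a C-set, and let $\mathrm{U}\in\mathbb{R}^{n_u\times m}$ be such that $\mathcal{U}:=\{u\in\mathbb{R}^m:\mathrm{U}u\le\mathbf{1}\}$ (a polyhedral convex set containing the origin in its interior). Fix $\lambda\in[0,1)$. Let $u_d(0),\dots,u_d(T-1)\in\mathbb{R}^m$ be an input sequence applied to the system and $x_d(0),\dots,x_d(T)\in\mathbb{R}^n$ the corresponding state sequence, i.e. $x_d(k+1)=Ax_d(k)+Bu_d(k)$ for $k=0,\dots,T-1$, and set $U_{0,T}:=[u_d(0)\ \cdots\ u_d(T-1)]$, $X_{0,T}:=[x_d(0)\ \cdots\ x_d(T-1)]$, $X_{1,T}:=[x_d(1)\ \cdots\ x_d(T)]$. If there exist matrices $G_K\in\mathbb{R}^{T\times n}$ and $P\in\mathbb{R}^{n_s\times n_s}$ with $P\ge 0$ (entrywise) such that $P\mathbf{1}\le\lambda\mathbf{1}$, $\;P\mathrm{S}=\mathrm{S}X_{1,T}G_K$, $\;\mathrm{U}U_{0,T}G_K s\le\mathbf{1}$ for all vertices $s$ of $\mathcal{S}$, and $I_n=X_{0,T}G_K$, then the state-feedback gain $K=U_{0,T}G_K$ is such that $\mathcal{S}$ is $\lambda$-contractive for the closed-loop system $x^+=(A+BK)x$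 and $\mathcal{S}$ is admissible for $\mathcal{U}$ (i.e. $Kx\in\mathcal{U}$ for all $x\in\mathcal{S}$).
   Context: $\mathbf{1}$ denotes the vector of all ones of appropriate dimension; inequalities between vectors/matrices are entrywise. A C-set is a convex compact subset of $\mathbb{R}^n$ containing the origin as an interior point. For $\mu\ge0$, $\mu\mathcal{S}:=\{\mu x:x\in\mathcal{S}\}$. A C-set $\mathcal{S}$ is $\lambda$-contractive for $x^+=Fx$ (with $\lambda\in[0,1)$) if for each $x\in\mathcal{S}$, $\inf\{\lambda'\ge0: Fx\in\lambda'\mathcal{S}\}\le\lambda$. $\mathcal{S}$ is admissible for $\mathcal{U}$ (with gain $K$) if $Kx\in\mathcal{U}$ for every $x\in\mathcal{S}$. *)

From HB Require Import structures.
From mathcomp Require Import all_boot all_order all_algebra.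
From mathcomp Require Import all_classical all_reals all_analysis.
Set Implicit Arguments. Unset Strict Implicit. Unset Printing Implicit Defensive.
Import Order.TTheory GRing.Theory Num.Theory.
Import numFieldNormedType.Exports.
Local Open Scope classical_set_scope.
Local Open Scope ring_scope.

Definition mxle (R : realType) (p q : nat) (M N : 'M[R]_(p, q)) : Prop :=
  forall i j, M i j <= N i j.

Definition ones (R : realType) (p : nat) : 'cV[R]_p := const_mx 1.

Definition polyh (R : realType) (p q : nat) (M : 'M[R]_(p, q)) : set 'cV[R]_q :=
  [set x | mxle (M *m x) (ones R p)].

Definition convex_set_mx (R : realType) (n : nat) (C : set 'cV[R]_n) : Prop :=
  forall x y t, C x -> C y -> 0 <= t <= 1 -> C (t *: x + (1 - t) *: y).

Definition Cset (R : realType) (n : nat) (C : set 'cV[R]_n) : Prop :=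
  [/\ convex_set_mx C, compact C & (interior C) 0].

Definition scale_set (R : realType) (n : nat) (mu : R) (C : set 'cV[R]_n) :
  set 'cV[R]_n := [set mu *: x | x in C].

Definition contractive (R : realType) (n : nat) (F : 'M[R]_n)
  (C : set 'cV[R]_n) (lam : R) : Prop :=
  forall x, C x -> inf [set l : R | 0 <= l /\ scale_set l C (F *m x)] <= lam.

Definition admissible (R : realType) (n m : nat) (K : 'M[R]_(m, n))
  (C : set 'cV[R]_n) (Uc : set 'cV[R]_m) : Prop :=
  forall x, C x -> Uc (K *m x).

Definition vertex (R : realType) (n : nat) (C : set 'cV[R]_n) (s : 'cV[R]_n) : Prop :=
  C s /\ forall x y t, C x -> C y -> 0 < t < 1 -> s = t *: x + (1 - t) *: y ->
    x = s /\ y = s.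

Definition dmx (R : realType) (p T : nat) (v : nat -> 'cV[R]_p) (off : nat) : 'M[R]_(p, T) :=
  \matrix_(i < p, j < T) v (j + off)%N i 0.

From HB Require Import structures.
From mathcomp Require Import all_boot all_order all_algebra.
From mathcomp Require Import all_classical all_reals all_analysis.
From mathcomp Require Import lra ring.
Import Order.TTheory GRing.Theory Num.Theory.
Import numFieldNormedType.Exports.
Local Open Scope classical_set_scope.
Local Open Scope ring_scope.

(* Contractivity: for [x] in the polytope, [S F x = P S x <= P 1 <= lam 1], where the
   closed loop [F = A + B K] equals [X1 G_K] since [X1 = A X0 + B U0] and [X0 G_K = I].
   Admissibility: [{x | U K x <= 1}] is convex and contains the vertices, and a compact
   polyhedron lies in every convex set containing its vertices.  The latter goes by
   induction on the number of inactive constraints: a non-vertex [x] has a direction [d]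
   preserving its active constraints; by boundedness one can move from [x] along [d] and
   along [-d] until a new constraint becomes active, and [x] is a convex combination of
   the two endpoints. *)

Lemma onesE {R : realType} {p} i j : ones R p i j = 1.
Proof. by rewrite mxE. Qed.

Lemma polyhP {R : realType} {p q} {M : 'M[R]_(p, q)} {x} :
  polyh M x <-> forall i, (M *m x) i 0 <= 1.
Proof.
rewrite /polyh /mxle /=; split=> [Mx i | Mx i j]; first by have := Mx i 0; rewrite onesE.
by rewrite (ord1 j) onesE.
Qed.

Lemma mulmx_comb_entry {R : realType} {p q} (M : 'M[R]_(p, q)) (x y : 'cV[R]_q) a b i :
  (M *m (a *: x + b *: y)) i 0 = a * (M *m x) i 0 + b * (M *m y) i 0.
Proof. by rewrite mulmxDr -!scalemxAr !mxE. Qed.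

Lemma polyh_mulmxA {R : realType} {p q r} {M : 'M[R]_(p, q)} {K : 'M[R]_(q, r)} {x} :
  polyh (M *m K) x <-> polyh M (K *m x).
Proof. by rewrite /polyh /= mulmxA. Qed.

Lemma mulmxDZ_entry {R : realType} {p q} (M : 'M[R]_(p, q)) (x y : 'cV[R]_q) a i :
  (M *m (x + a *: y)) i 0 = (M *m x) i 0 + a * (M *m y) i 0.
Proof. by rewrite mulmxDr -scalemxAr !mxE. Qed.

Lemma polyh_convex {R : realType} {p q} (M : 'M[R]_(p, q)) : convex_set_mx (polyh M).
Proof.
move=> x y t /polyhP Mx /polyhP My /andP[t0 t1]; apply/polyhP => i.
rewrite mulmx_comb_entry.
have t1' : 0 <= 1 - t by rewrite subr_ge0.
have := ler_wpM2l t0 (Mx i); have := ler_wpM2l t1' (My i); lra.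
Qed.

Lemma not_vertex_split {R : realType} {n} {C : set 'cV[R]_n} {x} :
  C x -> ~ vertex C x ->
  exists w w' s, [/\ C w, C w', 0 < s < 1, x = s *: w + (1 - s) *: w' & w != x].
Proof.
move=> Cx notV; apply: contrapT => nosplit; apply: notV; split=> // y z t Cy Cz t01 xE.
have [yx|yx] := eqVneq y x; last by exfalso; apply: nosplit; exists y, z, t.
have [//|zx] := eqVneq z x.
exfalso; apply: nosplit; exists z, y, (1 - t); split => //.
  by move: t01 => /andP[t0 t1]; apply/andP; lra.
by rewrite xE [RHS]addrC opprB addrCA subrr addr0.
Qed.

Section CompactPolyhedron.
Context {R : realType} {ns n : nat} {S : 'M[R]_(ns, n)}.

Definition inactive (x : 'cV[R]_n) : {set 'I_ns} := [set i : 'I_ns | (S *m x) i 0 < 1].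

Lemma active_row_face {w w' : 'cV[R]_n} {s i} :
  polyh S w -> polyh S w' -> 0 < s < 1 ->
  1 <= (S *m (s *: w + (1 - s) *: w')) i 0 -> (S *m w) i 0 = 1.
Proof.
move=> /polyhP/(_ i) Sw /polyhP/(_ i) Sw' /andP[s0 s1].
rewrite mulmx_comb_entry; nra.
Qed.

Hypothesis cS : compact (polyh S).

(* Otherwise the ray [x + a e], [a >= 0], would stay in the bounded set [polyh S]. *)
Lemma compact_polyh_exit {x e : 'cV[R]_n} :
  polyh S x -> e != 0 -> exists i, 0 < (S *m e) i 0.
Proof.
move=> Sx e0; apply: contrapT => noexit.
have [M M_gt0 SM] := pinfty_ex_gt0 (compact_bounded cS).
have ray a : 0 <= a -> polyh S (x + a *: e).
  move=> a0; apply/polyhP => i; rewrite mulmxDZ_entry.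
  have /polyhP/(_ i) := Sx; have : (S *m e) i 0 <= 0.
    by rewrite leNgt; apply/negP => ei; apply: noexit; exists i.
  by move=> /(mulr_ge0_le0 a0); lra.
have e_gt0 : 0 < `|e| by rewrite normr_gt0.
pose a := (2 * M + 1) / `|e|.
have a_ge0 : 0 <= a by rewrite divr_ge0 //; lra.
have := ler_normB (x + a *: e) x; rewrite addrAC subrr add0r.
rewrite normrZ ger0_norm // divfK ?gt_eqF //.
have := SM _ (ray a a_ge0); have := SM _ Sx; rewrite /= => xM axM; lra.
Qed.

Lemma polyh_step {x e : 'cV[R]_n} :
  polyh S x -> (forall i, 1 <= (S *m x) i 0 -> (S *m e) i 0 = 0) ->
  (exists i, 0 < (S *m e) i 0) ->
  exists2 a : R, 0 < a &
    polyh S (x + a *: e) /\ (#|inactive (x + a *: e)| < #|inactive x|)%N.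
Proof.
move=> /polyhP Sx active [i0 ei0].
pose F i := (1 - (S *m x) i 0) / (S *m e) i 0.
have FeE i : 0 < (S *m e) i 0 -> F i * (S *m e) i 0 = 1 - (S *m x) i 0.
  by move=> ei; rewrite /F divfK ?gt_eqF.
case: (@arg_minP _ R _ i0 (fun i => 0 < (S *m e) i 0) F ei0) => i1 ei1 F_min.
have xi1 : (S *m x) i1 0 < 1.
  by rewrite ltNge; apply/negP => /active ei1_0; move: ei1; rewrite ei1_0 ltxx.
have a_gt0 : 0 < F i1 by rewrite divr_gt0 // subr_gt0.
exists (F i1) => //; split.
  apply/polyhP => j; rewrite mulmxDZ_entry.
  have [ej_gt0|ej_le0] := ltP 0 ((S *m e) j 0).
    have := ler_wpM2r (ltW ej_gt0) (F_min j ej_gt0); rewrite FeE //; lra.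
  have := mulr_ge0_le0 (ltW a_gt0) ej_le0; have := Sx j; lra.
apply: proper_card; apply/properP; split.
  apply/fintype.subsetP => j; rewrite !inE mulmxDZ_entry; apply: contraTT.
  by rewrite -!leNgt => /[dup] /active ->; rewrite mulr0 addr0.
by exists i1; rewrite !inE ?mulmxDZ_entry ?FeE //; lra.
Qed.

Lemma compact_polyh_sub_convex {C : set 'cV[R]_n} :
  convex_set_mx C -> (forall v, vertex (polyh S) v -> C v) -> polyh S `<=` C.
Proof.
move=> convC vertC x Sx; have [k xk] := ubnP #|inactive x|.
elim: k x Sx xk => // k IH x Sx; rewrite ltnS => xk.
have [|notV] := EM (vertex (polyh S) x); first exact: vertC.
have [w [w' [s [Sw Sw' s01 xE wx]]]] := not_vertex_split Sx notV.
pose d := w - x.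
have active i : 1 <= (S *m x) i 0 -> (S *m d) i 0 = 0.
  move=> xi; rewrite /d -scaleN1r mulmxDZ_entry (active_row_face Sw Sw' s01) -?xE //.
  by have /polyhP/(_ i) := Sx; lra.
have activeN i : 1 <= (S *m x) i 0 -> (S *m - d) i 0 = 0.
  by move=> xi; rewrite -scaleN1r -scalemxAr mxE active // mulr0.
have d_neq0 : d != 0 by rewrite subr_eq0.
have [a a_gt0 [Sa ka]] := polyh_step Sx active (compact_polyh_exit Sx d_neq0).
have dN_neq0 : - d != 0 by rewrite oppr_eq0.
have [b b_gt0 [Sb kb]] := polyh_step Sx activeN (compact_polyh_exit Sx dN_neq0).
have -> : x = (b / (a + b)) *: (x + a *: d) + (1 - b / (a + b)) *: (x + b *: - d).
  by apply/matrixP => i j; rewrite !mxE; field; lra.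
apply: convC; [exact: IH (leq_trans ka xk) | exact: IH (leq_trans kb xk) |].
by rewrite divr_ge0 ?ler_pdivrMr ?mul1r; lra.
Qed.
End CompactPolyhedron.

Lemma polyh_scale (R : realType) ns n (S : 'M[R]_(ns, n)) (y : 'cV[R]_n) l :
  0 < l -> (forall i, (S *m y) i 0 <= l) -> scale_set l (polyh S) y.
Proof.
move=> l_gt0 Sy; exists (l^-1 *: y); last by rewrite scalerA mulfV ?gt_eqF // scale1r.
by apply/polyhP => i; rewrite -scalemxAr mxE ler_pdivrMl // mulr1.
Qed.

Lemma contractive_polyh (R : realType) ns n (S : 'M[R]_(ns, n)) (F : 'M[R]_n) lam :
  0 <= lam -> (forall x, polyh S x -> forall i, (S *m (F *m x)) i 0 <= lam) ->
  contractive F (polyh S) lam.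
Proof.
move=> lam_ge0 SF x Sx; apply/ler_addgt0Pr => e e_gt0.
apply: ge_inf; first by exists 0 => l [].
split; first lra.
by apply: polyh_scale => [|i]; [lra | have := SF x Sx i; lra].
Qed.

Lemma nonneg_factor_row_le {R : realType} {ns n} {S : 'M[R]_(ns, n)} {F : 'M[R]_n}
    {P : 'M[R]_ns} {lam x} :
  mxle 0 P -> mxle (P *m ones R ns) (lam *: ones R ns) -> P *m S = S *m F ->
  polyh S x -> forall i, (S *m (F *m x)) i 0 <= lam.
Proof.
move=> P_ge0 P1 PS /polyhP Sx i.
have := P1 i 0; rewrite [X in _ <= X]mxE onesE mulr1; apply: le_trans.
rewrite mulmxA -PS -mulmxA [X in X <= _]mxE [X in _ <= X]mxE.
apply: ler_sum => k _; rewrite onesE.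
by apply: ler_wpM2l; [have := P_ge0 i k; rewrite mxE | exact: Sx].
Qed.

Lemma dmx_succ {R : realType} {n m T} {A : 'M[R]_n} {B : 'M[R]_(n, m)}
    {xd : nat -> 'cV[R]_n} {ud : nat -> 'cV[R]_m} :
  (forall k, (k < T)%N -> xd k.+1 = A *m xd k + B *m ud k) ->
  dmx T xd 1 = A *m dmx T xd 0 + B *m dmx T ud 0.
Proof.
move=> sys; apply/matrixP => i j; rewrite !mxE addn1 sys // !mxE.
by congr (_ + _); apply: eq_bigr => k _; rewrite !mxE addn0.
Qed.

Theorem theorem1 (R : realType) (n m ns nu T : nat)
  (A : 'M[R]_n) (B : 'M[R]_(n, m)) (S : 'M[R]_(ns, n)) (U : 'M[R]_(nu, m))
  (lam : R) (ud : nat -> 'cV[R]_m) (xd : nat -> 'cV[R]_n)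
  (GK : 'M[R]_(T, n)) (P : 'M[R]_ns) :
  Cset (polyh S) ->
  0 <= lam -> lam < 1 ->
  (forall k, (k < T)%N -> xd k.+1 = A *m xd k + B *m ud k) ->
  mxle 0 P ->
  mxle (P *m ones R ns) (lam *: ones R ns) ->
  P *m S = S *m dmx T xd 1 *m GK ->
  (forall s, vertex (polyh S) s -> mxle (U *m dmx T ud 0 *m GK *m s) (ones R nu)) ->
  1%:M = dmx T xd 0 *m GK ->
  contractive (A + B *m (dmx T ud 0 *m GK)) (polyh S) lam /\
  admissible (dmx T ud 0 *m GK) (polyh S) (polyh U).
Proof.
move=> [_ cS _] lam_ge0 _ sys P_ge0 P1 PS vertU X0G.
have closed_loop : A + B *m (dmx T ud 0 *m GK) = dmx T xd 1 *m GK.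
  by rewrite (dmx_succ sys) mulmxDl -!mulmxA -X0G mulmx1.
split.
  rewrite closed_loop; apply: contractive_polyh => // x.
  by apply: nonneg_factor_row_le P_ge0 P1 _; rewrite PS mulmxA.
move=> x Sx; apply/polyh_mulmxA.
apply: (compact_polyh_sub_convex cS (C := polyh _)) Sx => [|v /vertU].
  exact: polyh_convex.
by rewrite mulmxA.
Qed.
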